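(* (i) If the coin process $\mathbf X$ satisfies the lower-tail condition: for every $\delta>0$ there exist constants $K$ and $m_0$ with \[\Pr\Big(\tfrac1m\log\tfrac{1}{P_{X^m}(X^m)}\le\underline H(\mathbf X)-\delta\Big)\le\frac{K}{m^2}\quad\text{for all }m\ge m_0,\] then for every target process $\mathbf Y$, $L^\star_{\mathrm{int}}(\mathbf X,\mathbf Y)\le\frac{H(\mathbf Y)}{\underline H(\mathbf X)}$. (ii) If the coin process satisfies the upper-tail condition: for every $\delta>0$ there exist constants $K$ and $m_0$ with \[\Pr\Big(\tfrac1m\log\tfrac{1}{P_{X^m}(X^m)}\ge\overline H(\mathbf X)+\delta\Big)\le\frac{K}{m^2}\quad\text{for all }m\ge m_0,\] then for every target process $\mathbf Y$, $L^\star(\mathbf X,\mathbf Y)\ge\frac{H(\mathbf Y)}{\overline H(\mathbf X)}$.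
   Context: Logarithms are base 2; a ratio with denominator $0$ is read as $+\infty$. $\mathcal X$, $\mathcal Y$ are finite; $\mathbf X=\{X^m\}$ (coin) and $\mathbf Y=\{Y^n\}$ (target) are arbitrary processes given by consistent distributions. $\overline H(\mathbf X)=\inf\{\lambda:\lim_n\Pr(\frac1n\log\frac{1}{P_{X^n}(X^n)}\ge\lambda)=0\}$, $\underline H(\mathbf X)=\sup\{\lambda:\lim_n\Pr(\frac1n\log\frac{1}{P_{X^n}(X^n)}\le\lambda)=0\}$, $H(\mathbf Y)=\limsup_n\frac1nH(Y^n)$ with $H(Y^n)$ the Shannon entropy. A random number generation algorithm for $Y^n$ is a map $\phi:\bigcup_{i\ge0}\mathcal X^i\to\{\bot\}\cup\mathcal Y^n$ whose leaves (finite $s$ with $\phi(s)\in\mathcal Y^n$ and $\phi(s')=\bot$ for all proper prefixes $s'$) satisfy $\sum_{\text{leaves }s:\phi(s)=y^n}P_{X^{|s|}}(s)=P_{Y^n}(y^n)$ for all $y^n$; its stopping time is the length of the leaf reached by $X_1,X_2,\dots$ ($\infty$ if none). For algorithms $\phi_n$ generating $Y^n$ with stopping times $T_n$, a rate $L\ge0$ is average achievable if $\limsup_n\mathbb E[T_n]/n\le L$; $L^\star(\mathbf X,\mathbf Y)$ is the infimum average achievable rate over all valid algorithms and $L^\star_{\mathrm{int}}(\mathbf X,\mathbf Y)$ that for the interval algorithm. Interval algorithm: with $\mathcal X=\{1,\dots,M\}$, $\mathcal I_\bot=[0,1)$ and, for $s\in\mathcal X^i$ with $\mathcal I_s=[\underline\alpha_s,\overline\alpha_s)$,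 $\mathcal I_{sx}=[\underline\alpha_s+(\overline\alpha_s-\underline\alpha_s)\sum_{k<x}P_{X_{i+1}|X^i}(k|s),\ \underline\alpha_s+(\overline\alpha_s-\underline\alpha_s)\sum_{k\le x}P_{X_{i+1}|X^i}(k|s))$; $\mathcal J_t$ for $t\in\mathcal Y^j$ likewise from $P_{Y_{j+1}|Y^j}$; stop at the first $m$ with $\mathcal I_{X^m}\subseteq\mathcal J_{y^n}$ for some $y^n$ and output that $y^n$. *)

From Stdlib Require Import Reals Lra Lia List Classical ClassicalEpsilon.
Import ListNotations.
Open Scope R_scope.

(* Alphabets: X = {0,...,M-1}, Y = {0,...,N-1} (ordered as nat).
   Strings are lists of letters; a process is a function assigning to every
   finite string s its probability P_{X^|s|}(s). *)

Definition log2 (x : R) : R := ln x / ln 2.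

Definition lsum {A : Type} (f : A -> R) (l : list A) : R :=
  fold_right (fun a acc => f a + acc) 0 l.

Fixpoint words (M m : nat) : list (list nat) :=
  match m with
  | O => [nil]
  | S m' => flat_map (fun s => map (fun k => s ++ [k]) (seq 0 M)) (words M m')
  end.

Definition process (M : nat) (P : list nat -> R) : Prop :=
  (forall s, 0 <= P s) /\ P nil = 1 /\
  (forall s, P s = lsum (fun k => P (s ++ [k])) (seq 0 M)).

Definition info (P : list nat -> R) (n : nat) (s : list nat) : R :=
  / INR n * log2 (/ P s).

Definition Pr_ge (M : nat) (P : list nat -> R) (n : nat) (lam : R) : R :=
  lsum (fun s => if Rle_dec lam (info P n s) then P s else 0) (words M n).
Definition Pr_le (M : nat) (P : list nat -> R) (n : nat) (lam : R) : R :=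
  lsum (fun s => if Rle_dec (info P n s) lam then P s else 0) (words M n).

Definition is_inf (A : R -> Prop) (x : R) : Prop :=
  (forall y, A y -> x <= y) /\ (forall z, (forall y, A y -> z <= y) -> z <= x).

Definition is_Hupper (M : nat) (P : list nat -> R) (h : R) : Prop :=
  is_inf (fun lam => Un_cv (fun n => Pr_ge M P n lam) 0) h.
Definition is_Hlower (M : nat) (P : list nat -> R) (h : R) : Prop :=
  is_lub (fun lam => Un_cv (fun n => Pr_le M P n lam) 0) h.

Definition entropy (N : nat) (P : list nat -> R) (n : nat) : R :=
  lsum (fun y => if Rlt_dec 0 (P y) then P y * log2 (/ P y) else 0) (words N n).

Definition is_limsup (u : nat -> R) (l : R) : Prop :=
  forall eps, 0 < eps ->
    (exists N0, forall n, (N0 <= n)%nat -> u n <= l + eps) /\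
    (forall N0, exists n, (N0 <= n)%nat /\ l - eps <= u n).

Definition lower_tail (M : nat) (P : list nat -> R) (hl : R) : Prop :=
  forall delta, 0 < delta -> exists K : R, exists m0 : nat,
    forall m : nat, (m0 <= m)%nat -> (1 <= m)%nat ->
      Pr_le M P m (hl - delta) <= K / (INR m ^ 2).
Definition upper_tail (M : nat) (P : list nat -> R) (hu : R) : Prop :=
  forall delta, 0 < delta -> exists K : R, exists m0 : nat,
    forall m : nat, (m0 <= m)%nat -> (1 <= m)%nat ->
      Pr_ge M P m (hu + delta) <= K / (INR m ^ 2).

(* Stopping rules: [stop s] means "the algorithm outputs at s".
   A leaf is a string at which it stops but at no proper prefix. *)
Definition is_leaf (stop : list nat -> Prop) (s : list nat) : Prop :=
  stop s /\ forall s' t, t <> nil -> s = s' ++ t -> ~ stop s'.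

Definition pind (A : Prop) (x : R) : R :=
  if excluded_middle_informative A then x else 0.

(* Pr(T = i) *)
Definition leafmass (M : nat) (P : list nat -> R) (stop : list nat -> Prop) (i : nat) : R :=
  lsum (fun s => pind (is_leaf stop s) (P s)) (words M i).

(* E[T] is finite and equals e: T < infinity a.s. and sum_i i Pr(T = i) = e. *)
Definition expected_time (M : nat) (P : list nat -> R) (stop : list nat -> Prop) (e : R) : Prop :=
  infinite_sum (leafmass M P stop) 1 /\
  infinite_sum (fun i => INR i * leafmass M P stop i) e.

(* limsup_n E[T_n]/n <= L  (with E[T_n] = +infinity allowed) *)
Definition rate_ok (M : nat) (P : list nat -> R) (stop : nat -> list nat -> Prop) (L : R) : Prop :=
  forall eps, 0 < eps -> exists n0 : nat, forall n : nat, (n0 <= n)%nat ->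
    exists e, expected_time M P (stop n) e /\ e / INR n <= L + eps.

(* Random number generation algorithm phi for Y^n: None = bottom. *)
Definition halts (phi : list nat -> option (list nat)) (s : list nat) : Prop :=
  exists y, phi s = Some y.

Definition valid_alg (M N : nat) (PX PY : list nat -> R) (n : nat)
    (phi : list nat -> option (list nat)) : Prop :=
  (forall s y, Forall (fun k => (k < M)%nat) s -> phi s = Some y -> In y (words N n)) /\
  (forall y, In y (words N n) ->
     infinite_sum
       (fun i => lsum (fun s => pind (is_leaf (halts phi) s /\ phi s = Some y) (PX s))
                      (words M i))
       (PY y)).

Definition achievable (M N : nat) (PX PY : list nat -> R) (L : R) : Prop :=
  exists phi : nat -> list nat -> option (list nat),
    (forall n, valid_alg M N PX PY n (phi n)) /\
    rate_ok M PX (fun n => halts (phi n)) L.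

(* Interval algorithm. The interval I_s = [fst, snd) built recursively:
   I_{s x} from I_s using P_{X_{i+1}|X^i}(k|s) = P(s k)/P(s). *)
Fixpoint ival_aux (P : list nat -> R) (pre : list nat) (lo hi : R) (s : list nat) : R * R :=
  match s with
  | nil => (lo, hi)
  | x :: s' =>
      let c := fun k => P (pre ++ [k]) / P pre in
      ival_aux P (pre ++ [x])
        (lo + (hi - lo) * lsum c (seq 0 x))
        (lo + (hi - lo) * lsum c (seq 0 (S x))) s'
  end.
Definition ival (P : list nat -> R) (s : list nat) : R * R := ival_aux P nil 0 1 s.

Definition isub (I J : R * R) : Prop :=
  forall x, fst I <= x < snd I -> fst J <= x < snd J.

Definition int_stop (N : nat) (PX PY : list nat -> R) (n : nat) (s : list nat) : Prop :=
  exists y, In y (words N n) /\ isub (ival PX s) (ival PY y).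

Definition int_achievable (M N : nat) (PX PY : list nat -> R) (L : R) : Prop :=
  rate_ok M PX (int_stop N PX PY) L.

(* Both parts rest on E[T] = sum_j Pr(T > j), where T is the stopping time.

   (i) If after j coin letters the interval algorithm has not stopped, the coin
   interval I_t straddles an endpoint of some target interval J_y; if moreover
   P(t) <= r then I_t lies within r of that endpoint.  As the level-j coin intervals
   tile [0,1), Pr(T > j) <= Pr(P(X^j) > r) + sum_y min(P(y), 2r).  With r = 2^(-ja) and
   a just below H_lower(X), the first term is O(1/j^2) by the lower-tail condition and
   summing the second over j gives at most H(Y^n)/a + O(1); hence
   E[T_n]/n <= H(Y^n)/(n a) + O(1/n).

   (ii) For a valid algorithm each output y^n collects leaves s with P(s) <= P(y^n), so
   H(Y^n) <= sum over leaves of P(s) log 1/P(s).  For a leaf s of depth i and c just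
   above H_upper(X), log 1/P(s) <= c (i+1) + c #{m >= max(i,1) : all extensions of s of
   length m have information rate >= c}; summing over leaves gives
   H(Y^n) <= c (E[T_n] + 1 + sum_m Pr(info_m >= c)), and the last sum is bounded by the
   upper-tail condition. *)

From Stdlib Require Import Reals Lra Lia List Classical ClassicalEpsilon ZArith.
Import ListNotations.
Open Scope R_scope.

Lemma lsum_cons {A} (f : A -> R) a l : lsum f (a :: l) = f a + lsum f l.
Proof. reflexivity. Qed.

Lemma lsum_app {A} (f : A -> R) l1 l2 : lsum f (l1 ++ l2) = lsum f l1 + lsum f l2.
Proof. induction l1 as [|a l1 IH]; simpl; [lra|]. unfold lsum in *; simpl. rewrite IH; lra. Qed.

Lemma lsum_plus {A} (f g : A -> R) l : lsum (fun a => f a + g a) l = lsum f l + lsum g l.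
Proof. induction l; unfold lsum in *; simpl in *; lra. Qed.

Lemma lsum_minus {A} (f g : A -> R) l : lsum (fun a => f a - g a) l = lsum f l - lsum g l.
Proof. induction l; unfold lsum in *; simpl in *; lra. Qed.

Lemma lsum_scal {A} (f : A -> R) c l : lsum (fun a => c * f a) l = c * lsum f l.
Proof. induction l as [|a l IH]; unfold lsum in *; simpl in *; [lra|]. rewrite IH; lra. Qed.

Lemma lsum_le {A} (f g : A -> R) l :
  (forall a, In a l -> f a <= g a) -> lsum f l <= lsum g l.
Proof.
  induction l as [|a l IH]; intros H; unfold lsum in *; simpl in *; [lra|].
  specialize (IH (fun b h => H b (or_intror h))). specialize (H a (or_introl eq_refl)). lra.
Qed.

Lemma lsum_ext {A} (f g : A -> R) l : (forall a, In a l -> f a = g a) -> lsum f l = lsum g l.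
Proof. intros H. apply Rle_antisym; apply lsum_le; intros a h; rewrite H; auto; lra. Qed.

Lemma lsum_zero {A} (l : list A) : lsum (fun _ => 0) l = 0.
Proof. induction l as [|a l IH]; unfold lsum in *; simpl in *; [|rewrite IH]; lra. Qed.

Lemma lsum_nonneg {A} (f : A -> R) l : (forall a, In a l -> 0 <= f a) -> 0 <= lsum f l.
Proof. intros H. rewrite <- (lsum_zero l). apply lsum_le; auto. Qed.

Lemma lsum_elem_le {A} (f : A -> R) l a :
  In a l -> (forall b, In b l -> 0 <= f b) -> f a <= lsum f l.
Proof.
  intros Ha Hf. induction l as [|b l IH]; [destruct Ha|]. rewrite lsum_cons.
  pose proof (lsum_nonneg f l (fun b h => Hf b (or_intror h))).
  pose proof (Hf b (or_introl eq_refl)).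
  destruct Ha as [<-|Ha]; [lra|]. specialize (IH Ha (fun b h => Hf b (or_intror h))). lra.
Qed.

Lemma lsum_map {A B} (f : B -> R) (g : A -> B) l : lsum f (map g l) = lsum (fun a => f (g a)) l.
Proof. induction l as [|a l IH]; unfold lsum in *; simpl in *; [|rewrite IH]; auto. Qed.

Lemma lsum_flat_map {A B} (f : B -> R) (g : A -> list B) l :
  lsum f (flat_map g l) = lsum (fun a => lsum f (g a)) l.
Proof. induction l as [|a l IH]; simpl; auto. rewrite lsum_app, IH. reflexivity. Qed.

Lemma lsum_swap {A B} (f : A -> B -> R) l1 l2 :
  lsum (fun a => lsum (fun b => f a b) l2) l1 = lsum (fun b => lsum (fun a => f a b) l1) l2.
Proof.
  induction l1 as [|a l1 IH].
  - symmetry. apply lsum_zero.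
  - rewrite lsum_cons, IH, <- lsum_plus. apply lsum_ext. intros. rewrite lsum_cons. reflexivity.
Qed.

Lemma lsum_eventually {A} (f : A -> R) (h : nat -> A -> R) l :
  (forall a, In a l -> exists N0, forall Mb, (N0 <= Mb)%nat -> f a <= h Mb a) ->
  exists N0, forall Mb, (N0 <= Mb)%nat -> lsum f l <= lsum (h Mb) l.
Proof.
  induction l as [|a l IH]; intros H.
  - exists 0%nat. intros. unfold lsum; simpl; lra.
  - destruct (H a (or_introl eq_refl)) as [N1 H1].
    destruct IH as [N2 H2]; [intros; apply H; right; auto|].
    exists (Nat.max N1 N2). intros Mb HMb. rewrite !lsum_cons.
    specialize (H1 Mb ltac:(lia)). specialize (H2 Mb ltac:(lia)). lra.
Qed.

Lemma lsum_seq_S (f : nat -> R) s n : lsum f (seq s (S n)) = lsum f (seq s n) + f (s + n)%nat.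
Proof. rewrite seq_S, lsum_app, lsum_cons. change (lsum f []) with 0. lra. Qed.

Lemma lsum_sum_f (f : nat -> R) n : lsum f (seq 0 (S n)) = sum_f_R0 f n.
Proof. induction n as [|n IH]; [unfold lsum; simpl; lra|]. rewrite lsum_seq_S, IH. reflexivity. Qed.

Lemma lsum_mono_seq (f : nat -> R) n m :
  (n <= m)%nat -> (forall k, 0 <= f k) -> lsum f (seq 0 n) <= lsum f (seq 0 m).
Proof. intros H Hf. induction H; [lra|]. rewrite lsum_seq_S. specialize (Hf (0 + m)%nat). lra. Qed.

Lemma lsum_const (c : R) n : lsum (fun _ => c) (seq 0 n) = INR n * c.
Proof. induction n as [|n IH]; [unfold lsum; simpl; lra|]. rewrite lsum_seq_S, IH, S_INR. lra. Qed.

Lemma lsum_seq_single (f : nat -> R) i0 m : (i0 <= m)%nat -> f i0 = 1 ->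
  (forall i, (i <= m)%nat -> i <> i0 -> f i = 0) -> lsum f (seq 0 (S m)) = 1.
Proof.
  intros Hi H1 H0. induction m as [|m IH].
  - replace i0 with 0%nat in H1 by lia. unfold lsum; simpl. lra.
  - rewrite lsum_seq_S. simpl (0 + S m)%nat. destruct (Nat.eq_dec i0 (S m)) as [->|Hne].
    + rewrite H1, (lsum_ext _ (fun _ => 0)), lsum_zero; [lra|].
      intros a Ha. apply in_seq in Ha. apply H0; lia.
    + rewrite IH, H0 by (auto; lia || (intros; apply H0; lia)). lra.
Qed.

Lemma pind_true (A : Prop) x : A -> pind A x = x.
Proof. intros H. unfold pind. destruct excluded_middle_informative; tauto. Qed.

Lemma pind_false (A : Prop) x : ~ A -> pind A x = 0.
Proof. intros H. unfold pind. destruct excluded_middle_informative; tauto. Qed.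

Lemma pind_cases (A : Prop) x : (A /\ pind A x = x) \/ (~ A /\ pind A x = 0).
Proof. unfold pind. destruct excluded_middle_informative; tauto. Qed.

Lemma pind_0 (A : Prop) : pind A 0 = 0.
Proof. destruct (pind_cases A 0) as [[_ ->]|[_ ->]]; reflexivity. Qed.

Lemma pind_nonneg (A : Prop) x : 0 <= x -> 0 <= pind A x.
Proof. destruct (pind_cases A x) as [[_ ->]|[_ ->]]; lra. Qed.

Lemma pind_le (A : Prop) x : 0 <= x -> pind A x <= x.
Proof. destruct (pind_cases A x) as [[_ ->]|[_ ->]]; lra. Qed.

Lemma pind_le_le (A : Prop) x y : 0 <= x -> x <= y -> pind A x <= pind A y.
Proof. intros. destruct (classic A); [rewrite !pind_true|rewrite !pind_false]; auto; lra. Qed.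

Lemma pind_mono (A B : Prop) x : 0 <= x -> (A -> B) -> pind A x <= pind B x.
Proof.
  intros Hx H. destruct (pind_cases A x) as [[HA ->]|[_ ->]].
  - rewrite pind_true; auto; lra.
  - apply pind_nonneg; auto.
Qed.

Lemma pind_ext (A B : Prop) x : (A <-> B) -> pind A x = pind B x.
Proof.
  intros H. destruct (classic A); [rewrite !pind_true|rewrite !pind_false]; tauto.
Qed.

Lemma pind_lsum {T} (A : Prop) (f : T -> R) l :
  pind A (lsum f l) = lsum (fun a => pind A (f a)) l.
Proof.
  destruct (classic A).
  - rewrite pind_true by auto. apply lsum_ext; intros; rewrite pind_true; auto.
  - rewrite pind_false, <- (lsum_zero l) by auto. apply lsum_ext; intros; rewrite pind_false; auto.
Qed.

Lemma pind_1 (A : Prop) x : pind A x = pind A 1 * x.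
Proof. destruct (classic A); [rewrite !pind_true|rewrite !pind_false]; auto; lra. Qed.

Lemma pind_and (A B : Prop) x : pind (A /\ B) x = pind A (pind B x).
Proof.
  destruct (classic A).
  - rewrite (pind_true A) by auto. apply pind_ext. tauto.
  - rewrite !pind_false by tauto. reflexivity.
Qed.

Lemma NoDup_pind_some {A} (l : list A) (v : option A) x :
  NoDup l -> 0 <= x -> lsum (fun y => pind (v = Some y) x) l <= x.
Proof.
  intros H Hx. induction H as [|y l Hy Hl IH]; [unfold lsum; simpl; lra|]. rewrite lsum_cons.
  destruct (classic (v = Some y)) as [Hv|Hv].
  - rewrite pind_true, (lsum_ext _ (fun _ => 0)), lsum_zero by
      (auto; intros a Ha; apply pind_false; rewrite Hv; intros E; inversion E; subst; auto).
    lra.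
  - rewrite pind_false by auto. lra.
Qed.

Definition letters (M : nat) (s : list nat) : Prop := Forall (fun k => (k < M)%nat) s.

Lemma words_In M m s : In s (words M m) <-> length s = m /\ letters M s.
Proof.
  unfold letters. revert s. induction m as [|m IH]; intros s; simpl.
  - split; [intros [<-|[]]; split; auto|].
    intros [H _]. destruct s; [auto|discriminate].
  - rewrite in_flat_map. split.
    + intros [t [Ht Hin]]. apply in_map_iff in Hin. destruct Hin as [k [<- Hk]].
      apply in_seq in Hk. apply IH in Ht. destruct Ht as [Hl Hf].
      rewrite length_app; simpl. split; [lia|].
      apply Forall_app; split; auto. constructor; [lia|constructor].
    + intros [Hl Hf]. destruct (@exists_last _ s) as [t [k Hs]]; [intros ->; discriminate|].
      subst s. exists t. apply Forall_app in Hf. destruct Hf as [Hf1 Hf2].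
      inversion Hf2; subst. rewrite length_app in Hl; simpl in Hl. split.
      * apply IH. split; auto; lia.
      * apply in_map_iff. exists k. split; auto. apply in_seq; lia.
Qed.

Lemma words_NoDup M m : NoDup (words M m).
Proof.
  induction m as [|m IH]; simpl; [constructor; auto; constructor|].
  induction IH as [|x l Hx Hl IHl]; simpl; [constructor|].
  apply NoDup_app; auto.
  - apply NoDup_map_inv with (f := fun l => last l 0%nat).
    rewrite map_map, (map_ext _ (fun x => x)), map_id by (intros; apply last_last).
    apply seq_NoDup.
  - intros a Ha1 Ha2. apply in_map_iff in Ha1. destruct Ha1 as [k [<- _]].
    apply in_flat_map in Ha2. destruct Ha2 as [y [Hy Hin]]. apply in_map_iff in Hin.
    destruct Hin as [k' [Heq _]]. apply app_inj_tail in Heq. destruct Heq; subst. auto.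
Qed.

Lemma lsum_words_S {M m} (f : list nat -> R) :
  lsum f (words M (S m)) = lsum (fun s => lsum (fun k => f (s ++ [k])) (seq 0 M)) (words M m).
Proof. simpl. rewrite lsum_flat_map. apply lsum_ext; intros. apply lsum_map. Qed.

Lemma lsum_words_split M i j (F : list nat -> list nat -> R) :
  lsum (fun t => F t (firstn i t)) (words M (i + j)) =
  lsum (fun s => lsum (fun u => F (s ++ u) s) (words M j)) (words M i).
Proof.
  revert F. induction j as [|j IH]; intros F.
  - rewrite Nat.add_0_r. apply lsum_ext. intros s Hs. apply words_In in Hs.
    unfold lsum; simpl. rewrite app_nil_r, <- (proj1 Hs), firstn_all. lra.
  - rewrite Nat.add_succ_r, lsum_words_S.
    transitivity (lsum (fun t => lsum (fun k => F (t ++ [k]) (firstn i t)) (seq 0 M))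
                       (words M (i + j))).
    { apply lsum_ext. intros t Ht. apply words_In in Ht. apply lsum_ext. intros k _.
      rewrite firstn_app. replace (i - length t)%nat with 0%nat by lia.
      simpl. rewrite app_nil_r. auto. }
    rewrite (IH (fun t s => lsum (fun k => F (t ++ [k]) s) (seq 0 M))).
    apply lsum_ext. intros s _. rewrite lsum_words_S. apply lsum_ext. intros u _.
    apply lsum_ext. intros k _. rewrite app_assoc. auto.
Qed.

Section Process.
Variables (M : nat) (P : list nat -> R).
Hypothesis HP : process M P.

Lemma P_nonneg s : 0 <= P s.
Proof. apply HP. Qed.

Lemma P_ext s j : P s = lsum (fun u => P (s ++ u)) (words M j).
Proof.
  induction j as [|j IH]; [unfold lsum; simpl; rewrite app_nil_r; lra|].
  rewrite IH, lsum_words_S. apply lsum_ext. intros u _.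
  rewrite (proj2 (proj2 HP) (s ++ u)). apply lsum_ext. intros. rewrite app_assoc; auto.
Qed.

Lemma P_total m : lsum P (words M m) = 1.
Proof. rewrite <- (proj1 (proj2 HP)), (P_ext [] m). apply lsum_ext. auto. Qed.

Lemma P_child_le s k : (k < M)%nat -> P (s ++ [k]) <= P s.
Proof.
  intros Hk. rewrite (proj2 (proj2 HP) s).
  apply (lsum_elem_le (fun k => P (s ++ [k]))); [apply in_seq; lia|intros; apply P_nonneg].
Qed.

Lemma P_ext_le s u : letters M u -> P (s ++ u) <= P s.
Proof.
  revert s. induction u as [|k u IH] using rev_ind; intros s Hu; [rewrite app_nil_r; lra|].
  apply Forall_app in Hu. destruct Hu as [H1 H2]. inversion H2; subst.
  rewrite app_assoc. eapply Rle_trans; [apply P_child_le; auto|]. apply IH; auto.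
Qed.

Lemma P_le1 s : letters M s -> P s <= 1.
Proof. intros H. rewrite <- (proj1 (proj2 HP)). apply (P_ext_le [] s H). Qed.

End Process.

(* For a stopping rule [stop], [leafmass i] = Pr(T = i); the survival
   probability [survival m] = Pr(T > m) is the mass of the strings of length m none of
   whose prefixes stops. *)

Section Stopping.
Variables (M : nat) (P : list nat -> R).
Hypothesis HP : process M P.
Variable stop : list nat -> Prop.

Definition stopped_by (m : nat) (t : list nat) : Prop :=
  exists i, (i <= m)%nat /\ stop (firstn i t).

Definition survival (m : nat) : R :=
  lsum (fun t => pind (~ stopped_by m t) (P t)) (words M m).

Lemma firstn_prefix_eq (t s' t' : list nat) i :
  firstn i t = s' ++ t' -> firstn (length s') t = s'.
Proof.
  intros H. assert (Hle : (length s' <= i)%nat).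
  { apply (f_equal (@length nat)) in H. rewrite length_app, length_firstn in H. lia. }
  rewrite <- (Nat.min_l _ _ Hle), <- firstn_firstn, H, firstn_app, Nat.sub_diag, firstn_all.
  apply app_nil_r.
Qed.

Lemma first_stop t m : stopped_by m t ->
  exists i0, (i0 <= m)%nat /\ stop (firstn i0 t) /\
             forall j, (j < i0)%nat -> ~ stop (firstn j t).
Proof.
  intros [i [Hi Hst]]. revert Hi Hst.
  induction i as [i IH] using (well_founded_induction Wf_nat.lt_wf); intros Hi Hst.
  destruct (classic (exists j, (j < i)%nat /\ stop (firstn j t))) as [[j [Hj Hsj]]|Hn].
  - apply (IH j Hj); auto; lia.
  - exists i. repeat split; auto. intros j Hj Hsj. apply Hn; eauto.
Qed.

Lemma leaf_count_along_path (t : list nat) m : length t = m ->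
  lsum (fun i => pind (is_leaf stop (firstn i t)) 1) (seq 0 (S m)) = pind (stopped_by m t) 1.
Proof.
  intros Hl. destruct (classic (stopped_by m t)) as [Hs|Hs].
  - rewrite pind_true by auto.
    destruct (first_stop t m Hs) as [i0 [Hi0 [Hst Hmin]]].
    apply (lsum_seq_single _ i0); auto.
    + apply pind_true. split; auto. intros s' t' Hne Heq Hs'.
      apply (Hmin (length s')); [|rewrite (firstn_prefix_eq _ _ _ _ Heq); auto].
      apply (f_equal (@length nat)) in Heq. rewrite length_app, length_firstn in Heq.
      destruct t'; [congruence|]. simpl in Heq. lia.
    + intros i Hi Hne. apply pind_false. intros [Hsi Hleaf].
      destruct (Nat.lt_ge_cases i i0) as [Hlt|Hge]; [apply (Hmin i); auto|].
      apply (Hleaf (firstn i0 t) (firstn (i - i0) (skipn i0 t))); auto.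
      * intros He. apply (f_equal (@length nat)) in He.
        rewrite length_firstn, length_skipn in He. simpl in He. lia.
      * rewrite <- (firstn_skipn i0 t) at 1.
        rewrite firstn_app, length_firstn, firstn_firstn, (Nat.min_r i i0), Nat.min_l by lia.
        reflexivity.
  - rewrite pind_false, <- (lsum_zero (seq 0 (S m))) by auto. apply lsum_ext.
    intros i Hi. apply in_seq in Hi. apply pind_false. intros [H _].
    apply Hs. exists i. split; auto; lia.
Qed.

Lemma leaf_level (G : list nat -> R) i m : (i <= m)%nat ->
  lsum (fun s => pind (is_leaf stop s) (lsum (fun u => G (s ++ u)) (words M (m - i))))
       (words M i) =
  lsum (fun t => pind (is_leaf stop (firstn i t)) (G t)) (words M m).
Proof.
  intros H. replace (words M m) with (words M (i + (m - i))) by (f_equal; lia).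
  rewrite (lsum_words_split M i (m - i) (fun t s => pind (is_leaf stop s) (G t))).
  apply lsum_ext. intros. apply pind_lsum.
Qed.

Lemma leaf_sum_level (G : list nat -> R) m :
  lsum (fun i => lsum (fun s => pind (is_leaf stop s)
                         (lsum (fun u => G (s ++ u)) (words M (m - i)))) (words M i))
       (seq 0 (S m))
  = lsum (fun t => pind (stopped_by m t) (G t)) (words M m).
Proof.
  rewrite (lsum_ext _ (fun i => lsum (fun t => pind (is_leaf stop (firstn i t)) (G t))
                                     (words M m)))
    by (intros i Hi; apply in_seq in Hi; apply leaf_level; lia).
  rewrite lsum_swap. apply lsum_ext. intros t Ht. apply words_In in Ht.
  rewrite (pind_1 (stopped_by m t)), <- (leaf_count_along_path t m) by tauto.
  rewrite (lsum_ext _ (fun i => G t * pind (is_leaf stop (firstn i t)) 1))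
    by (intros; rewrite pind_1; lra).
  rewrite lsum_scal. lra.
Qed.

Lemma leaf_sum_level_le (G : list nat -> R) m : (forall t, 0 <= G t) ->
  lsum (fun i => lsum (fun s => pind (is_leaf stop s)
                         (lsum (fun u => G (s ++ u)) (words M (m - i)))) (words M i))
       (seq 0 (S m))
  <= lsum G (words M m).
Proof. intros H. rewrite leaf_sum_level. apply lsum_le. intros; apply pind_le; auto. Qed.

Lemma leafmass_survival m : lsum (leafmass M P stop) (seq 0 (S m)) + survival m = 1.
Proof.
  unfold leafmass, survival.
  rewrite (lsum_ext _ (fun i => lsum (fun s => pind (is_leaf stop s)
                                   (lsum (fun u => P (s ++ u)) (words M (m - i)))) (words M i)))
    by (intros; apply lsum_ext; intros; rewrite <- P_ext; auto).
  rewrite leaf_sum_level, <- lsum_plus, <- (P_total M P HP m). apply lsum_ext.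
  intros t _. destruct (classic (stopped_by m t)).
  - rewrite pind_true, pind_false; auto; lra.
  - rewrite pind_false, pind_true; auto; lra.
Qed.

Lemma leafmass_nonneg i : 0 <= leafmass M P stop i.
Proof. apply lsum_nonneg. intros. apply pind_nonneg, (P_nonneg M P HP). Qed.

Lemma survival_nonneg m : 0 <= survival m.
Proof. apply lsum_nonneg. intros. apply pind_nonneg, (P_nonneg M P HP). Qed.

Lemma survival_le_1 m : survival m <= 1.
Proof.
  pose proof (leafmass_survival m).
  pose proof (lsum_nonneg (leafmass M P stop) (seq 0 (S m)) (fun i _ => leafmass_nonneg i)). lra.
Qed.

Lemma leafmass_step m : leafmass M P stop (S m) = survival m - survival (S m).
Proof.
  pose proof (leafmass_survival m) as H0. pose proof (leafmass_survival (S m)) as H1.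
  rewrite lsum_seq_S in H1. simpl (0 + S m)%nat in H1. lra.
Qed.

Lemma survival_antitone k m : (k <= m)%nat -> survival m <= survival k.
Proof.
  induction 1 as [|m _ IH]; [lra|].
  pose proof (leafmass_step m). pose proof (leafmass_nonneg (S m)). lra.
Qed.

Lemma survival_le_notstop m :
  survival m <= lsum (fun t => pind (~ stop t) (P t)) (words M m).
Proof.
  apply lsum_le. intros t Ht. apply words_In in Ht. apply pind_mono; [apply (P_nonneg M P HP)|].
  intros H1 H2. apply H1. exists m. split; auto. rewrite <- (proj1 Ht), firstn_all. auto.
Qed.

Lemma partial_mean_survival m :
  lsum (fun i => INR i * leafmass M P stop i) (seq 0 (S m)) + INR m * survival m =
  lsum survival (seq 0 m).
Proof.
  induction m as [|m IH]; [unfold lsum; simpl; lra|].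
  rewrite (lsum_seq_S (fun i => INR i * leafmass M P stop i) 0 (S m)), (lsum_seq_S survival 0 m).
  simpl (0 + _)%nat. rewrite leafmass_step, <- IH, S_INR. ring.
Qed.

Lemma expected_time_of_survival B : (forall m, lsum survival (seq 0 (S m)) <= B) ->
  exists e, expected_time M P stop e /\ e <= B.
Proof.
  intros HB. set (q := leafmass M P stop).
  assert (HB0 : 0 <= B).
  { specialize (HB 0%nat). pose proof (survival_nonneg 0). unfold lsum in HB; simpl in HB. lra. }
  assert (Htail : forall m, INR (S m) * survival m <= B).
  { intros m. eapply Rle_trans; [|apply (HB m)]. rewrite <- lsum_const. apply lsum_le.
    intros a Ha. apply in_seq in Ha. apply survival_antitone. lia. }
  assert (Hpart : forall m, sum_f_R0 (fun i => INR i * q i) m <= B).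
  { intros m. rewrite <- lsum_sum_f. eapply Rle_trans; [|apply (HB m)].
    rewrite (lsum_seq_S survival 0 m), <- (partial_mean_survival m).
    pose proof (Rmult_le_pos _ _ (pos_INR m) (survival_nonneg m)).
    pose proof (survival_nonneg (0 + m)). fold q. lra. }
  assert (Hgrow : Un_growing (sum_f_R0 (fun i => INR i * q i))).
  { intros k. rewrite tech5. pose proof (Rmult_le_pos _ _ (pos_INR (S k)) (leafmass_nonneg (S k))).
    fold q in H. lra. }
  destruct (growing_cv _ Hgrow) as [e He]; [exists B; intros x [m ->]; apply Hpart|].
  exists e. split; [split|].
  - intros eps Heps. destruct (INR_unbounded (B / eps)) as [N0 HN0].
    exists N0. intros k Hk. unfold R_dist. rewrite <- lsum_sum_f.
    pose proof (leafmass_survival k). pose proof (survival_nonneg k). fold q in H |- *.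
    rewrite Rabs_left1 by lra. specialize (Htail k).
    assert (HNk : INR N0 <= INR k) by (apply le_INR; lia).
    assert (Hk' : B < eps * INR (S k)).
    { rewrite S_INR. apply Rmult_lt_reg_r with (/ eps); [apply Rinv_0_lt_compat; lra|].
      replace (eps * (INR k + 1) * / eps) with (INR k + 1) by (field; lra).
      unfold Rdiv in HN0. lra. }
    assert (0 < INR (S k)) by (apply lt_0_INR; lia). nra.
  - exact He.
  - apply Rnot_lt_le. intros Hlt. destruct (He (e - B)) as [N0 HN0]; [lra|].
    specialize (HN0 N0 (le_n _)). specialize (Hpart N0).
    unfold R_dist in HN0. rewrite Rabs_left1 in HN0 by lra. lra.
Qed.

End Stopping.

Lemma expected_time_nonneg M P stop e : process M P -> expected_time M P stop e -> 0 <= e.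
Proof.
  intros HP [_ He]. apply Rnot_lt_le. intros Hl. destruct (He (- e)) as [N0 HN0]; [lra|].
  specialize (HN0 N0 (le_n _)). unfold R_dist in HN0.
  pose proof (cond_pos_sum _ N0
    (fun i => Rmult_le_pos _ _ (pos_INR i) (leafmass_nonneg M P HP stop i))).
  rewrite Rabs_right in HN0 by lra. lra.
Qed.

Lemma ln2_pos : 0 < ln 2.
Proof. rewrite <- ln_1. apply ln_increasing; lra. Qed.

Lemma log2_inv_nonneg p : 0 < p -> p <= 1 -> 0 <= log2 (/ p).
Proof.
  intros Hp Hp1. unfold log2. apply Rmult_le_pos; [|left; apply Rinv_0_lt_compat, ln2_pos].
  rewrite ln_Rinv by lra. destruct (Rle_lt_or_eq_dec _ _ Hp1) as [Hlt| ->]; [|rewrite ln_1; lra].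
  pose proof (ln_increasing _ _ Hp Hlt). rewrite ln_1 in H. lra.
Qed.

Lemma log2_inv_anti p q : 0 < p -> p <= q -> log2 (/ q) <= log2 (/ p).
Proof.
  intros Hp Hpq. unfold log2. apply Rmult_le_compat_r; [left; apply Rinv_0_lt_compat, ln2_pos|].
  rewrite !ln_Rinv by lra. destruct (Rle_lt_or_eq_dec _ _ Hpq) as [Hlt| ->]; [|lra].
  pose proof (ln_increasing _ _ Hp Hlt). lra.
Qed.

Lemma ceil_nat x : 0 <= x -> exists J : nat, x < INR J <= x + 1.
Proof.
  intros Hx. destruct (archimed x) as [H1 H2]. exists (Z.to_nat (up x)).
  assert (0 < up x)%Z by (apply lt_IZR; simpl; lra).
  rewrite INR_IZR_INZ, Z2Nat.id by lia. lra.
Qed.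

Lemma le_eps (a b : R) : (forall eps, 0 < eps -> a <= b + eps) -> a <= b.
Proof. intros H. apply Rnot_lt_le. intros Hlt. specialize (H ((a - b) / 2) ltac:(lra)). lra. Qed.

Lemma eventually_div_small C eps : 0 < eps ->
  exists N0, forall n, (N0 <= n)%nat -> 0 < INR n /\ C / INR n <= eps.
Proof.
  intros He. destruct (INR_unbounded (Rabs C / eps)) as [N1 HN1].
  exists (Nat.max N1 1). intros n Hn.
  assert (Hn0 : 0 < INR n) by (apply lt_0_INR; lia).
  assert (INR N1 <= INR n) by (apply le_INR; lia).
  split; auto. apply Rmult_le_reg_r with (INR n); auto. unfold Rdiv.
  rewrite Rmult_assoc, Rinv_l by lra.
  assert (Rabs C < eps * INR n).
  { apply Rmult_lt_reg_r with (/ eps); [apply Rinv_0_lt_compat; lra|].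
    replace (eps * INR n * / eps) with (INR n) by (field; lra). unfold Rdiv in HN1. lra. }
  pose proof (Rle_abs C). lra.
Qed.

Lemma limsup_le_of_bound (u : nat -> R) l b C : is_limsup u l ->
  (exists n0, forall n, (n0 <= n)%nat -> u n <= b + C / INR n) -> l <= b.
Proof.
  intros Hl [n0 Hn0]. apply le_eps. intros eps Heps.
  destruct (eventually_div_small C (eps / 2)) as [N1 HN1]; [lra|].
  destruct (proj2 (Hl (eps / 2) ltac:(lra)) (Nat.max n0 N1)) as [n [Hn Hge]].
  specialize (Hn0 n ltac:(lia)). destruct (HN1 n ltac:(lia)). lra.
Qed.

Lemma limsup_nonneg (u : nat -> R) l : is_limsup u l -> (forall n, 0 <= u n) -> 0 <= l.
Proof.
  intros Hl Hu. apply le_eps. intros eps Heps. destruct (Hl eps Heps) as [[N0 HN0] _].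
  specialize (HN0 N0 (le_n _)). specialize (Hu N0). lra.
Qed.

Lemma le_mult_of_perturbed x a b : 0 <= a -> 0 <= b ->
  (forall d d', 0 < d -> 0 < d' -> x <= (a + d) * (b + d')) -> x <= a * b.
Proof.
  intros Ha Hb H. apply le_eps. intros eps Heps.
  set (t := Rmin 1 (eps / (a + b + 1))).
  assert (Ht : 0 < t) by (apply Rmin_pos; [lra|apply Rdiv_lt_0_compat; lra]).
  assert (Ht1 : t <= 1) by apply Rmin_l.
  assert (Ht2 : t * (a + b + 1) <= eps).
  { apply Rle_trans with (eps / (a + b + 1) * (a + b + 1)).
    - apply Rmult_le_compat_r; [lra|apply Rmin_r].
    - right. field. lra. }
  specialize (H t t Ht Ht). nra.
Qed.

Lemma lsum_count_ge (F : nat -> R) v a b n : 0 <= v -> (b <= n)%nat -> (forall m, 0 <= F m) ->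
  (forall m, (a <= m)%nat -> (m < b)%nat -> v <= F m) -> INR (b - a) * v <= lsum F (seq 0 n).
Proof.
  intros Hv Hb HF HFv.
  assert (Hk : forall k, INR (Nat.min k b - a) * v <= lsum F (seq 0 k)).
  { induction k as [|k IH]; [simpl; unfold lsum; simpl; lra|].
    rewrite lsum_seq_S. simpl (0 + k)%nat. pose proof (HF k) as HFk.
    destruct (le_lt_dec b k) as [Hbk|Hkb]; [|destruct (le_lt_dec a k) as [Hak|Hka]].
    - rewrite (Nat.min_r (S k) b) by lia. rewrite (Nat.min_r k b) in IH by lia. lra.
    - rewrite (Nat.min_l (S k) b) by lia. rewrite (Nat.min_l k b) in IH by lia.
      replace (S k - a)%nat with (S (k - a)) by lia. rewrite S_INR.
      specialize (HFv k Hak Hkb). lra.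
    - rewrite (Nat.min_l (S k) b) by lia.
      replace (S k - a)%nat with 0%nat by lia. simpl. rewrite Rmult_0_l.
      pose proof (lsum_nonneg F (seq 0 k) (fun m _ => HF m)). lra. }
  specialize (Hk n). rewrite Nat.min_r in Hk by lia. exact Hk.
Qed.

Lemma lsum_restrict (F : nat -> R) a m : (forall i, 0 <= F i) ->
  lsum (fun i => pind (i <= m)%nat (F i)) (seq 0 a) <= lsum F (seq 0 (S m)).
Proof.
  intros HF.
  assert (E : forall a, lsum (fun i => pind (i <= m)%nat (F i)) (seq 0 a) =
                        lsum F (seq 0 (Nat.min a (S m)))).
  { induction a0 as [|a0 IH]; [reflexivity|]. rewrite lsum_seq_S, IH. simpl (0 + a0)%nat.
    destruct (le_lt_dec a0 m).
    - rewrite pind_true by lia. replace (Nat.min (S a0) (S m)) with (S (Nat.min a0 (S m))) by lia.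
      rewrite lsum_seq_S. replace (0 + Nat.min a0 (S m))%nat with a0 by lia. auto.
    - rewrite pind_false by lia.
      replace (Nat.min (S a0) (S m)) with (Nat.min a0 (S m)) by lia. lra. }
  rewrite E. apply lsum_mono_seq; auto. lia.
Qed.

Lemma lsum_count_lt a n : lsum (fun m => pind (m < a)%nat 1) (seq 0 n) = INR (Nat.min n a).
Proof.
  induction n as [|n IH]; [reflexivity|]. rewrite lsum_seq_S, IH. simpl (0 + n)%nat.
  destruct (le_lt_dec a n).
  - rewrite pind_false, !Nat.min_r by lia. lra.
  - rewrite pind_true, !Nat.min_l, S_INR by lia. lra.
Qed.

(* sum_{m >= 1} 1/m^2 <= 2, by telescoping 1/m^2 <= 1/(m-1) - 1/m. *)
Lemma sum_inv_sq n : lsum (fun m => pind (1 <= m)%nat (/ (INR m ^ 2))) (seq 0 n) <= 2.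
Proof.
  assert (H : forall n, (1 <= n)%nat ->
           lsum (fun m => pind (1 <= m)%nat (/ (INR m ^ 2))) (seq 0 (S n)) <= 2 - / INR n).
  { induction n0 as [|n0 IH]; intros H; [lia|]. destruct n0.
    - unfold lsum; simpl. rewrite pind_false, pind_true by lia. simpl. lra.
    - rewrite lsum_seq_S. simpl (0 + _)%nat. rewrite pind_true by lia. specialize (IH ltac:(lia)).
      assert (0 < INR (S n0)) by (apply lt_0_INR; lia).
      assert (/ (INR (S (S n0)) ^ 2) <= / INR (S n0) - / INR (S (S n0))).
      { replace (/ INR (S n0) - / INR (S (S n0))) with (/ (INR (S n0) * INR (S (S n0))))
          by (rewrite (S_INR (S n0)); field; lra).
        apply Rinv_le_contravar; [apply Rmult_lt_0_compat; apply lt_0_INR; lia|].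
        rewrite (S_INR (S n0)). nra. }
      lra. }
  destruct n as [|[|n]]; [unfold lsum; simpl; lra| |].
  { unfold lsum; simpl. rewrite pind_false by lia. lra. }
  pose proof (H (S n) ltac:(lia)).
  assert (0 < / INR (S n)) by (apply Rinv_0_lt_compat, lt_0_INR; lia). lra.
Qed.

Lemma tail_sum_bound (u : nat -> R) K m1 : (1 <= m1)%nat ->
  (forall m, (m < m1)%nat -> u m <= 1) ->
  (forall m, (m1 <= m)%nat -> u m <= K / INR m ^ 2) ->
  forall n, lsum u (seq 0 n) <= INR m1 + 2 * Rabs K.
Proof.
  intros Hm1 Hsmall Hlarge n.
  apply Rle_trans with
    (lsum (fun m => pind (m < m1)%nat 1 + Rabs K * pind (1 <= m)%nat (/ (INR m ^ 2))) (seq 0 n)).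
  - apply lsum_le. intros m _.
    assert (Hinv : 0 <= pind (1 <= m)%nat (/ (INR m ^ 2))).
    { apply pind_nonneg. destruct m; [simpl; rewrite Rmult_0_l, Rinv_0; lra|].
      left. apply Rinv_0_lt_compat, pow_lt, lt_0_INR; lia. }
    destruct (le_lt_dec m1 m).
    + rewrite pind_false, pind_true by lia. eapply Rle_trans; [apply Hlarge; auto|].
      unfold Rdiv. rewrite Rplus_0_l. apply Rmult_le_compat_r; [|apply Rle_abs].
      left. apply Rinv_0_lt_compat, pow_lt, lt_0_INR; lia.
    + rewrite pind_true by lia. pose proof (Rmult_le_pos _ _ (Rabs_pos K) Hinv).
      specialize (Hsmall m l). lra.
  - rewrite lsum_plus, lsum_scal, lsum_count_lt.
    pose proof (sum_inv_sq n). pose proof (Rabs_pos K).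
    assert (INR (Nat.min n m1) <= INR m1) by (apply le_INR; lia). nra.
Qed.

Lemma geo_sum (J : nat) (x : R) m : 0 < x < 1 ->
  lsum (fun j => pind (J <= j)%nat (x ^ j)) (seq 0 m) <= x ^ J / (1 - x).
Proof.
  intros Hx.
  assert (H : forall m, lsum (fun j => pind (J <= j)%nat (x ^ j)) (seq 0 m) <=
                        (x ^ J - x ^ (Nat.max m J)) / (1 - x)).
  { induction m0 as [|m0 IH]; [unfold lsum; simpl; unfold Rdiv; rewrite Rminus_diag; lra|].
    rewrite lsum_seq_S. simpl (0 + m0)%nat. destruct (le_lt_dec J m0).
    - rewrite pind_true, Nat.max_l by lia. rewrite Nat.max_l in IH by lia.
      apply Rle_trans with ((x ^ J - x ^ m0) / (1 - x) + x ^ m0); [lra|].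
      right. simpl. field. lra.
    - rewrite pind_false, Nat.max_r by lia. rewrite Nat.max_r in IH by lia. lra. }
  eapply Rle_trans; [apply H|]. unfold Rdiv.
  apply Rmult_le_compat_r; [left; apply Rinv_0_lt_compat; lra|].
  pose proof (pow_le x (Nat.max m J) ltac:(lra)). lra.
Qed.

Definition ent_term (p : R) : R := if Rlt_dec 0 p then p * log2 (/ p) else 0.

Lemma entropy_as_sum N P n : entropy N P n = lsum (fun y => ent_term (P y)) (words N n).
Proof. reflexivity. Qed.

Lemma ent_term_nonneg p : p <= 1 -> 0 <= ent_term p.
Proof.
  intros Hp. unfold ent_term. destruct Rlt_dec; [|lra].
  apply Rmult_le_pos; [lra|apply log2_inv_nonneg; lra].
Qed.

Lemma entropy_nonneg N P n : process N P -> 0 <= entropy N P n.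
Proof.
  intros HP. apply lsum_nonneg. intros y Hy. apply words_In in Hy.
  apply (ent_term_nonneg (P y)), (P_le1 N P HP). tauto.
Qed.

Lemma partial_le_sum (u : nat -> R) l I :
  (forall i, 0 <= u i) -> infinite_sum u l -> sum_f_R0 u I <= l.
Proof.
  intros H Hs. apply growing_ineq; auto. intros k. rewrite tech5. specialize (H (S k)). lra.
Qed.

Lemma partial_mean_le M P stop e I : process M P -> expected_time M P stop e ->
  lsum (fun i => (INR i + 1) * leafmass M P stop i) (seq 0 (S I)) <= e + 1.
Proof.
  intros HP [He1 He2].
  rewrite (lsum_ext _ (fun i => INR i * leafmass M P stop i + leafmass M P stop i))
    by (intros; ring).
  rewrite lsum_plus, !lsum_sum_f.
  pose proof (partial_le_sum _ _ I
    (fun i => Rmult_le_pos _ _ (pos_INR i) (leafmass_nonneg M P HP stop i)) He2).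
  pose proof (partial_le_sum _ _ I (leafmass_nonneg M P HP stop) He1). lra.
Qed.

Section OutputEntropy.
Variables (M N : nat) (PX PY : list nat -> R).
Hypotheses (HX : process M PX) (HY : process N PY).
Variables (n : nat) (phi : list nat -> option (list nat)).
Hypothesis Hvalid : valid_alg M N PX PY n phi.

Definition surprisal (s : list nat) : R := PX s * log2 (/ PX s).

Lemma surprisal_nonneg s : letters M s -> 0 <= surprisal s.
Proof.
  intros H. unfold surprisal. destruct (Rle_lt_or_eq_dec _ _ (P_nonneg M PX HX s)) as [Hp|Hp].
  - apply Rmult_le_pos; [lra|]. apply log2_inv_nonneg; auto. apply (P_le1 M); auto.
  - rewrite <- Hp. lra.
Qed.

Definition output_mass (y : list nat) (i : nat) : R :=
  lsum (fun s => pind (is_leaf (halts phi) s /\ phi s = Some y) (PX s)) (words M i).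

Lemma output_mass_nonneg y i : 0 <= output_mass y i.
Proof. apply lsum_nonneg. intros. apply pind_nonneg, (P_nonneg M); auto. Qed.

Lemma leaf_mass_le_output y i s : In y (words N n) -> In s (words M i) ->
  is_leaf (halts phi) s -> phi s = Some y -> PX s <= PY y.
Proof.
  intros Hy Hs Hl Hphi.
  apply Rle_trans with (output_mass y i).
  - unfold output_mass. rewrite <- (pind_true _ (PX s) (conj Hl Hphi)).
    apply (lsum_elem_le (fun s => pind (is_leaf (halts phi) s /\ phi s = Some y) (PX s))); auto.
    intros; apply pind_nonneg, (P_nonneg M); auto.
  - eapply Rle_trans; [|apply (partial_le_sum (output_mass y) (PY y) i (output_mass_nonneg y)),
                         (proj2 Hvalid y Hy)].
    destruct i; [simpl; lra|]. rewrite tech5.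
    pose proof (cond_pos_sum (output_mass y) i (output_mass_nonneg y)). lra.
Qed.

(* The entropy term of an output y is eventually bounded by the surprisal of its leaves:
   each leaf s of y has log 1/P(y) <= log 1/P(s), and the leaves exhaust P(y). *)
Lemma output_term_bound y eps : In y (words N n) -> 0 < eps -> exists N0, forall I, (N0 <= I)%nat ->
  ent_term (PY y) <=
  lsum (fun i => lsum (fun s => pind (is_leaf (halts phi) s /\ phi s = Some y) (surprisal s))
                      (words M i)) (seq 0 (S I)) + eps * PY y.
Proof.
  intros Hy Heps.
  set (Sy := fun I => lsum (fun i => lsum (fun s => pind (is_leaf (halts phi) s /\ phi s = Some y)
                                              (surprisal s)) (words M i)) (seq 0 (S I))).
  assert (HS : forall I, 0 <= Sy I).
  { intros. apply lsum_nonneg. intros i _. apply lsum_nonneg. intros s Hs.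
    apply pind_nonneg, surprisal_nonneg. apply words_In in Hs; tauto. }
  enough (H : exists N0, forall I, (N0 <= I)%nat -> ent_term (PY y) <= Sy I + eps * PY y)
    by exact H.
  pose proof (P_nonneg N PY HY y) as HPy. unfold ent_term.
  destruct (Rlt_dec 0 (PY y)) as [Hp|Hp]; [|exists 0%nat; intros I _; specialize (HS I); nra].
  set (g := log2 (/ PY y)).
  assert (Hg : 0 <= g).
  { apply log2_inv_nonneg; auto. apply (P_le1 N); auto. apply words_In in Hy; tauto. }
  (* the leaves of y up to depth I carry all of P(y) up to eps P(y) / (g + 1) *)
  destruct (proj2 Hvalid y Hy (eps * PY y / (g + 1))) as [N0 HN0].
  { apply Rdiv_lt_0_compat; nra. }
  exists N0. intros I HI. specialize (HN0 I HI). unfold R_dist in HN0.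
  rewrite <- lsum_sum_f in HN0. fold (output_mass y) in HN0.
  assert (Hle : lsum (output_mass y) (seq 0 (S I)) * g <= Sy I).
  { rewrite Rmult_comm, <- lsum_scal. apply lsum_le. intros i _. unfold output_mass.
    rewrite <- lsum_scal. apply lsum_le. intros s Hs.
    destruct (classic (is_leaf (halts phi) s /\ phi s = Some y)) as [[Hl Hphi]|HA].
    - rewrite !pind_true by auto. unfold surprisal.
      destruct (Rle_lt_or_eq_dec _ _ (P_nonneg M PX HX s)) as [Hq|Hq]; [|rewrite <- Hq; lra].
      rewrite (Rmult_comm g). apply Rmult_le_compat_l; [lra|].
      apply log2_inv_anti; auto. apply (leaf_mass_le_output y i s); auto.
    - rewrite !pind_false by auto. lra. }
  apply Rabs_def2 in HN0. destruct HN0 as [HN1 HN2].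
  assert (Hdef : (PY y - lsum (output_mass y) (seq 0 (S I))) * g <= eps * PY y).
  { apply Rle_trans with (eps * PY y / (g + 1) * g); [apply Rmult_le_compat_r; lra|].
    unfold Rdiv. rewrite Rmult_assoc.
    assert (/ (g + 1) * g <= 1).
    { apply Rmult_le_reg_l with (g + 1); [lra|]. rewrite <- Rmult_assoc, Rinv_r by lra. lra. }
    assert (0 <= eps * PY y) by nra. nra. }
  fold g. nra.
Qed.

Lemma entropy_leaf_bound eps : 0 < eps -> exists I,
  entropy N PY n <=
  lsum (fun i => lsum (fun s => pind (is_leaf (halts phi) s) (surprisal s)) (words M i))
       (seq 0 (S I)) + eps.
Proof.
  intros Heps.
  destruct (lsum_eventually (fun y => ent_term (PY y))
    (fun I y => lsum (fun i => lsum (fun s => pind (is_leaf (halts phi) s /\ phi s = Some y)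
                                          (surprisal s)) (words M i)) (seq 0 (S I)) + eps * PY y)
    (words N n)) as [N0 HN0].
  { intros y Hy. apply output_term_bound; auto. }
  exists N0. rewrite entropy_as_sum. eapply Rle_trans; [apply (HN0 N0 (le_n _))|].
  rewrite lsum_plus, lsum_scal, (P_total N PY HY), Rmult_1_r. apply Rplus_le_compat_r.
  rewrite lsum_swap. apply lsum_le. intros i _. rewrite lsum_swap. apply lsum_le. intros s Hs.
  apply words_In in Hs.
  rewrite (lsum_ext _ (fun y => pind (is_leaf (halts phi) s) (pind (phi s = Some y) (surprisal s))))
    by (intros; apply pind_and).
  rewrite <- pind_lsum. apply pind_le_le.
  - apply lsum_nonneg. intros. apply pind_nonneg, surprisal_nonneg; tauto.
  - apply NoDup_pind_some; [apply words_NoDup|apply surprisal_nonneg; tauto].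
Qed.

End OutputEntropy.

Section LeafSurprisal.
Variables (M : nat) (PX : list nat -> R).
Hypothesis HX : process M PX.
Variable c : R.
Hypothesis Hc : 0 < c.

Definition rate_mass (m : nat) (t : list nat) : R :=
  if Rle_dec c (info PX m t) then PX t else 0.

Lemma rate_mass_nonneg m t : 0 <= rate_mass m t.
Proof. unfold rate_mass. destruct Rle_dec; [apply (P_nonneg M); auto|lra]. Qed.

Lemma rate_mass_extension s u m : 0 < PX s -> letters M u -> (1 <= m)%nat ->
  c * INR m <= log2 (/ PX s) -> rate_mass m (s ++ u) = PX (s ++ u).
Proof.
  intros Hp Hu Hm Hcm. unfold rate_mass.
  destruct (Rle_lt_or_eq_dec _ _ (P_nonneg M PX HX (s ++ u))) as [Hq|Hq];
    [|rewrite <- Hq; destruct Rle_dec; auto].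
  destruct Rle_dec as [_|Hn]; auto. exfalso. apply Hn. unfold info.
  assert (Hm1 : 1 <= INR m) by (apply (le_INR 1); lia).
  assert (log2 (/ PX s) <= log2 (/ PX (s ++ u)))
    by (apply log2_inv_anti; auto; apply (P_ext_le M); auto).
  apply Rmult_le_reg_l with (INR m); [lra|]. rewrite <- Rmult_assoc, Rinv_r by lra. lra.
Qed.

Lemma surprisal_bound i s : In s (words M i) -> exists Nb, forall Mb, (Nb <= Mb)%nat ->
  surprisal PX s <= c * (INR i + 1) * PX s +
    c * lsum (fun m => pind (1 <= m)%nat (pind (i <= m)%nat
                         (lsum (fun u => rate_mass m (s ++ u)) (words M (m - i)))))
             (seq 0 (S Mb)).
Proof.
  intros Hs. apply words_In in Hs. destruct Hs as [Hlen Hfa].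
  set (count := fun Mb => lsum (fun m => pind (1 <= m)%nat (pind (i <= m)%nat
                   (lsum (fun u => rate_mass m (s ++ u)) (words M (m - i))))) (seq 0 (S Mb))).
  enough (H : exists Nb, forall Mb, (Nb <= Mb)%nat ->
                surprisal PX s <= c * (INR i + 1) * PX s + c * count Mb) by exact H.
  assert (Hcount0 : forall Mb, 0 <= count Mb).
  { intros. apply lsum_nonneg. intros. repeat apply pind_nonneg.
    apply lsum_nonneg. intros; apply rate_mass_nonneg. }
  unfold surprisal. destruct (Rle_lt_or_eq_dec _ _ (P_nonneg M PX HX s)) as [Hp|Hp].
  2:{ exists 0%nat. intros Mb _. rewrite <- Hp. specialize (Hcount0 Mb). nra. }
  set (g := log2 (/ PX s)).
  assert (Hg : 0 <= g) by (apply log2_inv_nonneg; auto; apply (P_le1 M); auto).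
  destruct (ceil_nat (g / c)) as [J [HJ1 HJ2]].
  { apply Rmult_le_pos; [lra|left; apply Rinv_0_lt_compat; lra]. }
  assert (HgJ : g <= c * INR J).
  { apply Rmult_lt_compat_l with (r := c) in HJ1; auto. unfold Rdiv in HJ1.
    rewrite <- Rmult_assoc, (Rmult_comm c g), Rmult_assoc, Rinv_r in HJ1 by lra. lra. }
  exists J. intros Mb HMb. set (k := Nat.max i 1).
  (* every m in [max(i,1), J) contributes all of P(s) *)
  assert (Hk : INR (J - k) * PX s <= count Mb).
  { apply lsum_count_ge; [lra|lia| |].
    - intros. repeat apply pind_nonneg. apply lsum_nonneg. intros; apply rate_mass_nonneg.
    - intros m Hm1 Hm2. rewrite !pind_true by lia.
      right. rewrite (P_ext M PX HX s (m - i)). apply lsum_ext. intros u Hu.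
      apply words_In in Hu. symmetry. apply rate_mass_extension; try tauto; [lia|].
      assert (INR m + 1 <= INR J) by (rewrite <- S_INR; apply le_INR; lia).
      apply Rmult_le_reg_r with (/ c); [apply Rinv_0_lt_compat; lra|].
      rewrite Rmult_comm, <- Rmult_assoc, Rinv_l by lra. fold g. unfold Rdiv in HJ2. lra. }
  assert (HJk : INR J - INR k <= INR (J - k)).
  { destruct (le_lt_dec k J) as [HkJ|HJk]; [rewrite minus_INR; auto; lra|].
    replace (J - k)%nat with 0%nat by lia. pose proof (lt_INR _ _ HJk). simpl; lra. }
  assert (Hki : INR k <= INR i + 1) by (rewrite <- S_INR; apply le_INR; lia).
  assert (g <= c * (INR i + 1) + c * INR (J - k)) by nra.
  apply Rmult_le_compat_l with (r := PX s) in H; [|lra].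
  apply Rmult_le_compat_l with (r := c) in Hk; [|lra]. nra.
Qed.

Variable stop : list nat -> Prop.

Definition leaf_tail (Mb i : nat) (s : list nat) : R :=
  lsum (fun m => pind (1 <= m)%nat (pind (i <= m)%nat (pind (is_leaf stop s)
                   (lsum (fun u => rate_mass m (s ++ u)) (words M (m - i)))))) (seq 0 (S Mb)).

Lemma leaf_surprisal_bound i s : In s (words M i) -> exists Nb, forall Mb, (Nb <= Mb)%nat ->
  pind (is_leaf stop s) (surprisal PX s) <=
  c * (INR i + 1) * pind (is_leaf stop s) (PX s) + c * leaf_tail Mb i s.
Proof.
  intros Hs. destruct (surprisal_bound i s Hs) as [Nb HNb]. exists Nb. intros Mb HMb.
  unfold leaf_tail. destruct (classic (is_leaf stop s)) as [Hl|Hl].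
  - rewrite !(pind_true (is_leaf stop s)) by auto.
    rewrite (lsum_ext _ (fun m => pind (1 <= m)%nat (pind (i <= m)%nat
               (lsum (fun u => rate_mass m (s ++ u)) (words M (m - i))))))
      by (intros; rewrite (pind_true (is_leaf stop s)); auto). auto.
  - rewrite !(pind_false (is_leaf stop s)) by auto.
    rewrite (lsum_ext _ (fun _ => 0)), lsum_zero
      by (intros; rewrite (pind_false (is_leaf stop s)), !pind_0; auto).
    lra.
Qed.

(* Summed over the leaves, the counts are at most sum_{1<=m<=Mb} Pr(info_m >= c), since
   each string of length m lies below at most one leaf. *)
Lemma leaf_tail_sum I Mb :
  lsum (fun i => lsum (leaf_tail Mb i) (words M i)) (seq 0 (S I)) <=
  lsum (fun m => pind (1 <= m)%nat (Pr_ge M PX m c)) (seq 0 (S Mb)).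
Proof.
  unfold leaf_tail.
  rewrite (lsum_ext _ (fun i => lsum (fun m => lsum (fun s => pind (1 <= m)%nat
              (pind (i <= m)%nat (pind (is_leaf stop s)
                 (lsum (fun u => rate_mass m (s ++ u)) (words M (m - i)))))) (words M i))
              (seq 0 (S Mb)))) by (intros; apply lsum_swap).
  rewrite lsum_swap. apply lsum_le. intros m _.
  rewrite (lsum_ext _ (fun i => pind (1 <= m)%nat (pind (i <= m)%nat
              (lsum (fun s => pind (is_leaf stop s)
                 (lsum (fun u => rate_mass m (s ++ u)) (words M (m - i)))) (words M i)))))
    by (intros; rewrite !pind_lsum; reflexivity).
  rewrite <- pind_lsum.
  assert (Hnn : forall i, 0 <= lsum (fun s => pind (is_leaf stop s)
                  (lsum (fun u => rate_mass m (s ++ u)) (words M (m - i)))) (words M i)).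
  { intros. apply lsum_nonneg. intros. apply pind_nonneg, lsum_nonneg.
    intros. apply rate_mass_nonneg. }
  apply pind_le_le; [apply lsum_nonneg; intros; apply pind_nonneg, Hnn|].
  eapply Rle_trans; [apply lsum_restrict, Hnn|].
  apply leaf_sum_level_le. intros; apply rate_mass_nonneg.
Qed.

Lemma leaf_surprisal_sum e I : expected_time M PX stop e -> exists Mb,
  lsum (fun i => lsum (fun s => pind (is_leaf stop s) (surprisal PX s)) (words M i)) (seq 0 (S I))
  <= c * (e + 1) + c * lsum (fun m => pind (1 <= m)%nat (Pr_ge M PX m c)) (seq 0 (S Mb)).
Proof.
  intros He.
  destruct (lsum_eventually
     (fun i => lsum (fun s => pind (is_leaf stop s) (surprisal PX s)) (words M i))
     (fun Mb i => lsum (fun s => c * (INR i + 1) * pind (is_leaf stop s) (PX s) +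
                                 c * leaf_tail Mb i s) (words M i))
     (seq 0 (S I))) as [Mb HMb].
  { intros i _. apply lsum_eventually. intros s Hs. apply leaf_surprisal_bound; auto. }
  exists Mb. eapply Rle_trans; [apply (HMb Mb (le_n _))|].
  rewrite (lsum_ext _ (fun i => c * ((INR i + 1) * leafmass M PX stop i) +
                                c * lsum (leaf_tail Mb i) (words M i)))
    by (intros; rewrite lsum_plus, !lsum_scal; unfold leafmass; ring).
  rewrite lsum_plus, !lsum_scal.
  pose proof (partial_mean_le M PX stop e I HX He). pose proof (leaf_tail_sum I Mb).
  apply Rplus_le_compat; apply Rmult_le_compat_l; lra.
Qed.

End LeafSurprisal.

Lemma entropy_bound M N PX PY phi n e c C0 :
  process M PX -> process N PY -> valid_alg M N PX PY n phi ->
  expected_time M PX (halts phi) e -> 0 < c ->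
  (forall Mb, lsum (fun m => pind (1 <= m)%nat (Pr_ge M PX m c)) (seq 0 (S Mb)) <= C0) ->
  entropy N PY n <= c * (e + 1 + C0).
Proof.
  intros HX HY Hv He Hc HC0. apply le_eps. intros eps Heps.
  destruct (entropy_leaf_bound M N PX PY HX HY n phi Hv eps Heps) as [I HI].
  destruct (leaf_surprisal_sum M PX HX c Hc (halts phi) e I He) as [Mb HMb].
  specialize (HC0 Mb). nra.
Qed.

Lemma info_nonneg M P n s : process M P -> letters M s -> 0 < P s -> 0 <= info P n s.
Proof.
  intros HP Hs Hp. unfold info. apply Rmult_le_pos.
  - destruct n; [simpl; rewrite Rinv_0; lra|]. left. apply Rinv_0_lt_compat, lt_0_INR; lia.
  - apply log2_inv_nonneg; auto. apply (P_le1 M); auto.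
Qed.

Lemma Pr_ge_le1 M P n lam : process M P -> Pr_ge M P n lam <= 1.
Proof.
  intros HP. unfold Pr_ge. rewrite <- (P_total M P HP n). apply lsum_le. intros s _.
  destruct Rle_dec; [lra|apply (P_nonneg M); auto].
Qed.

Lemma Pr_ge_nonpos M P n lam : process M P -> lam <= 0 -> Pr_ge M P n lam = 1.
Proof.
  intros HP Hl. unfold Pr_ge. rewrite <- (P_total M P HP n). apply lsum_ext. intros s Hs.
  apply words_In in Hs. destruct (Rle_lt_or_eq_dec _ _ (P_nonneg M P HP s)) as [Hq|Hq].
  - destruct Rle_dec as [_|Hn]; auto. exfalso. apply Hn.
    pose proof (info_nonneg M P n s HP (proj2 Hs) Hq). lra.
  - rewrite <- Hq. destruct Rle_dec; auto.
Qed.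

Lemma Hupper_nonneg M P hu : process M P -> is_Hupper M P hu -> 0 <= hu.
Proof.
  intros HP [_ Hglb]. apply Hglb. intros y Hy. apply Rnot_lt_le. intros Hlt.
  destruct (Hy (1 / 2)) as [N0 HN0]; [lra|]. specialize (HN0 N0 (le_n _)).
  rewrite Pr_ge_nonpos in HN0 by (auto; lra). unfold R_dist in HN0.
  rewrite Rabs_right in HN0; lra.
Qed.

Lemma upper_tail_summable M P hu d : process M P -> upper_tail M P hu -> 0 < d ->
  exists C0, forall Mb,
    lsum (fun m => pind (1 <= m)%nat (Pr_ge M P m (hu + d))) (seq 0 (S Mb)) <= C0.
Proof.
  intros HP Htail Hd. destruct (Htail d Hd) as [K [m0 HK]].
  exists (INR (Nat.max m0 1) + 2 * Rabs K). intros Mb.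
  apply tail_sum_bound; [lia| |].
  - intros m _. destruct (le_lt_dec 1 m).
    + rewrite pind_true by auto. apply Pr_ge_le1; auto.
    + rewrite pind_false by lia. lra.
  - intros m Hm. rewrite pind_true by lia. apply HK; lia.
Qed.

Lemma achievable_rate_nonneg M N PX PY L : process M PX -> achievable M N PX PY L -> 0 <= L.
Proof.
  intros HX [phi [_ Hrate]]. apply le_eps. intros eps Heps.
  destruct (Hrate eps Heps) as [n0 Hn0]. destruct (Hn0 (S n0) ltac:(lia)) as [e [He Hen]].
  pose proof (expected_time_nonneg M PX _ e HX He).
  assert (0 < INR (S n0)) by (apply lt_0_INR; lia).
  assert (0 <= e / INR (S n0)) by (apply Rmult_le_pos; [lra|left; apply Rinv_0_lt_compat; lra]).
  lra.
Qed.

(* Part (ii): every achievable rate L satisfies H(Y) <= L H_upper(X).  For c = H_upper + d,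
   entropy_bound gives H(Y^n)/n <= c (L + eps) + O(1/n) for large n. *)
Lemma converse M N PX PY hu HY :
  process M PX -> process N PY -> is_Hupper M PX hu ->
  is_limsup (fun n => entropy N PY n / INR n) HY ->
  upper_tail M PX hu -> forall L, achievable M N PX PY L -> HY <= L * hu.
Proof.
  intros HX HYp Hhu Hlim Htail L HL. rewrite Rmult_comm.
  apply le_mult_of_perturbed;
    [apply (Hupper_nonneg M PX); auto|apply (achievable_rate_nonneg M N PX PY); auto|].
  intros d eps Hd Heps. set (c := hu + d).
  assert (Hc : 0 < c) by (pose proof (Hupper_nonneg M PX hu HX Hhu); unfold c; lra).
  destruct (upper_tail_summable M PX hu d HX Htail Hd) as [C0 HC0].
  destruct HL as [phi [Hvalid Hrate]]. destruct (Hrate eps Heps) as [n0 Hn0].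
  apply (limsup_le_of_bound _ _ _ (c * (1 + C0)) Hlim). exists (Nat.max n0 1). intros n Hn.
  destruct (Hn0 n ltac:(lia)) as [e [He Hen]].
  pose proof (entropy_bound M N PX PY (phi n) n e c C0 HX HYp (Hvalid n) He Hc HC0) as Hent.
  assert (Hn1 : 0 < INR n) by (apply lt_0_INR; lia).
  assert (Hdiv : entropy N PY n / INR n <= c * (e / INR n) + c * (1 + C0) / INR n).
  { apply Rle_trans with (c * (e + 1 + C0) / INR n).
    - apply Rmult_le_compat_r; [left; apply Rinv_0_lt_compat; lra|exact Hent].
    - right. field. lra. }
  apply Rmult_le_compat_l with (r := c) in Hen; lra.
Qed.

Definition lo (P : list nat -> R) (s : list nat) : R := fst (ival P s).
Definition hi (P : list nat -> R) (s : list nat) : R := snd (ival P s).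
Definition cond_prob (P : list nat -> R) (s : list nat) (k : nat) : R := P (s ++ [k]) / P s.

Lemma ival_aux_snoc P pre l h s x :
  ival_aux P pre l h (s ++ [x]) =
  (fst (ival_aux P pre l h s) + (snd (ival_aux P pre l h s) - fst (ival_aux P pre l h s)) *
                                 lsum (cond_prob P (pre ++ s)) (seq 0 x),
   fst (ival_aux P pre l h s) + (snd (ival_aux P pre l h s) - fst (ival_aux P pre l h s)) *
                                 lsum (cond_prob P (pre ++ s)) (seq 0 (S x))).
Proof.
  revert pre l h. induction s as [|a s IH]; intros pre l h; simpl.
  - rewrite app_nil_r. reflexivity.
  - rewrite IH, <- app_assoc. reflexivity.
Qed.

Lemma lo_snoc P s x : lo P (s ++ [x]) = lo P s + (hi P s - lo P s) * lsum (cond_prob P s) (seq 0 x).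
Proof. unfold lo, hi, ival. rewrite ival_aux_snoc. reflexivity. Qed.

Lemma hi_snoc P s x :
  hi P (s ++ [x]) = lo P s + (hi P s - lo P s) * lsum (cond_prob P s) (seq 0 (S x)).
Proof. unfold lo, hi, ival. rewrite ival_aux_snoc. reflexivity. Qed.

Definition overlap (a b u v : R) : R := Rmax 0 (Rmin b v - Rmax a u).

Lemma overlap_split a b c u v : a <= b -> b <= c ->
  overlap a c u v = overlap a b u v + overlap b c u v.
Proof. intros. unfold overlap, Rmax, Rmin. repeat destruct Rle_dec; lra. Qed.

Lemma overlap_sym a b u v : overlap a b u v = overlap u v a b.
Proof. unfold overlap, Rmax, Rmin. repeat destruct Rle_dec; lra. Qed.

Lemma overlap_nonneg a b u v : 0 <= overlap a b u v.
Proof. apply Rmax_l. Qed.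

Lemma overlap_le_len a b u v : u <= v -> overlap a b u v <= v - u.
Proof. intros. unfold overlap, Rmax, Rmin. repeat destruct Rle_dec; lra. Qed.

Lemma overlap_inside a b u v : u <= a -> a <= b -> b <= v -> overlap a b u v = b - a.
Proof. intros. unfold overlap, Rmax, Rmin. repeat destruct Rle_dec; lra. Qed.

Lemma overlap_straddle a b c d r : a <= b -> b - a <= r -> c <= d -> ~ (c <= a /\ b <= d) ->
  overlap a b c d <= overlap a b c (c + r) + overlap a b (d - r) d.
Proof. intros. unfold overlap, Rmax, Rmin. repeat destruct Rle_dec; lra. Qed.

Lemma overlap_telescope (b : nat -> R) K u v : (forall k, (k < K)%nat -> b k <= b (S k)) ->
  lsum (fun k => overlap (b k) (b (S k)) u v) (seq 0 K) = overlap (b 0%nat) (b K) u v.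
Proof.
  intros Hb. induction K as [|K IH].
  - unfold lsum; simpl. unfold overlap, Rmax, Rmin. repeat destruct Rle_dec; lra.
  - rewrite lsum_seq_S, IH by (intros; apply Hb; lia). simpl (0 + K)%nat.
    assert (Hm : forall k, (k <= K)%nat -> b 0%nat <= b k).
    { induction k as [|k IHk]; intros Hk; [lra|].
      pose proof (Hb k ltac:(lia)). specialize (IHk ltac:(lia)). lra. }
    rewrite <- overlap_split; [reflexivity|apply Hm; lia|apply Hb; lia].
Qed.

Section Intervals.
Variables (M : nat) (P : list nat -> R).
Hypothesis HP : process M P.

Lemma cond_prob_nonneg s k : 0 <= cond_prob P s k.
Proof.
  unfold cond_prob, Rdiv. apply Rmult_le_pos; [apply (P_nonneg M); auto|].
  destruct (Rle_lt_or_eq_dec _ _ (P_nonneg M P HP s)) as [Hp|Hp].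
  - left; apply Rinv_0_lt_compat; auto.
  - rewrite <- Hp, Rinv_0. lra.
Qed.

Lemma cond_prob_total s : 0 < P s -> lsum (cond_prob P s) (seq 0 M) = 1.
Proof.
  intros H. unfold cond_prob, Rdiv.
  rewrite (lsum_ext _ (fun k => / P s * P (s ++ [k]))) by (intros; ring).
  rewrite lsum_scal, <- (proj2 (proj2 HP) s). field. lra.
Qed.

Lemma ival_props s : letters M s -> hi P s - lo P s = P s /\ 0 <= lo P s /\ hi P s <= 1.
Proof.
  induction s as [|x s IH] using rev_ind; intros Hs.
  - unfold lo, hi. simpl. rewrite (proj1 (proj2 HP)). lra.
  - apply Forall_app in Hs. destruct Hs as [H1 H2]. inversion H2; subst.
    destruct (IH H1) as [Hw [Hl Hh]]. rewrite lo_snoc, hi_snoc, Hw, lsum_seq_S. simpl (0 + x)%nat.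
    pose proof (lsum_nonneg (cond_prob P s) (seq 0 x) (fun k _ => cond_prob_nonneg s k)).
    destruct (Rle_lt_or_eq_dec _ _ (P_nonneg M P HP s)) as [Hp|Hp].
    + assert (lsum (cond_prob P s) (seq 0 (S x)) <= 1).
      { rewrite <- (cond_prob_total s Hp). apply lsum_mono_seq; [lia|apply cond_prob_nonneg]. }
      rewrite lsum_seq_S in H0. simpl (0 + x)%nat in H0.
      unfold cond_prob at 2. split; [field; lra|split; nra].
    + rewrite <- Hp. assert (P (s ++ [x]) = 0).
      { pose proof (P_child_le M P HP s x H3). pose proof (P_nonneg M P HP (s ++ [x])). lra. }
      rewrite H0. lra.
Qed.

Lemma children_tile s u v : letters M s ->
  lsum (fun k => overlap (lo P (s ++ [k])) (hi P (s ++ [k])) u v) (seq 0 M) =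
  overlap (lo P s) (hi P s) u v.
Proof.
  intros Hs. destruct (ival_props s Hs) as [Hw _].
  set (b := fun k => lo P s + (hi P s - lo P s) * lsum (cond_prob P s) (seq 0 k)).
  rewrite (lsum_ext _ (fun k => overlap (b k) (b (S k)) u v))
    by (intros k _; unfold b; rewrite lo_snoc, hi_snoc; reflexivity).
  rewrite overlap_telescope.
  - unfold b. change (lsum (cond_prob P s) (seq 0 0)) with 0. rewrite Rmult_0_r, Rplus_0_r. f_equal.
    destruct (Rle_lt_or_eq_dec _ _ (P_nonneg M P HP s)) as [Hp|Hp].
    + rewrite cond_prob_total by auto. ring.
    + assert (hi P s = lo P s) by lra. rewrite H. ring.
  - intros k _. unfold b. rewrite lsum_seq_S, Hw.
    pose proof (cond_prob_nonneg s (0 + k)). pose proof (P_nonneg M P HP s). nra.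
Qed.

Lemma level_tile m u v :
  lsum (fun t => overlap (lo P t) (hi P t) u v) (words M m) = overlap 0 1 u v.
Proof.
  induction m as [|m IH].
  - unfold lsum; simpl. unfold lo, hi. simpl. lra.
  - rewrite lsum_words_S, <- IH. apply lsum_ext. intros t Ht. apply words_In in Ht.
    apply children_tile. tauto.
Qed.

Lemma overlap_self s : letters M s -> overlap (lo P s) (hi P s) 0 1 = P s.
Proof.
  intros Hs. destruct (ival_props s Hs) as [Hw [Hl Hh]]. pose proof (P_nonneg M P HP s).
  rewrite overlap_inside; lra.
Qed.

End Intervals.

Lemma isub_of a b c d : c <= a -> b <= d -> isub (a, b) (c, d).
Proof. intros H1 H2 x Hx. simpl in *. lra. Qed.

Section NotStopped.
Variables (M N : nat) (PX PY : list nat -> R).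
Hypotheses (HX : process M PX) (HY : process N PY).
Variables (n : nat) (r : R).
Hypothesis Hr : 0 < r.

Definition small_open_overlap (y t : list nat) : R :=
  pind (~ int_stop N PX PY n t /\ PX t <= r) (overlap (lo PX t) (hi PX t) (lo PY y) (hi PY y)).

Lemma notstop_split t : letters M t ->
  pind (~ int_stop N PX PY n t) (PX t) <=
  pind (r < PX t) (PX t) + lsum (fun y => small_open_overlap y t) (words N n).
Proof.
  intros Ht. unfold small_open_overlap. rewrite <- pind_lsum.
  rewrite (lsum_ext _ (fun y => overlap (lo PY y) (hi PY y) (lo PX t) (hi PX t)))
    by (intros; apply overlap_sym).
  rewrite (level_tile N PY HY), overlap_sym, (overlap_self M PX HX t Ht).
  pose proof (P_nonneg M PX HX t).
  destruct (classic (int_stop N PX PY n t)).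
  - rewrite (pind_false (~ _)) by tauto.
    pose proof (pind_nonneg (r < PX t) _ H).
    pose proof (pind_nonneg (~ int_stop N PX PY n t /\ PX t <= r) _ H). lra.
  - rewrite (pind_true (~ _)) by auto. destruct (Rlt_le_dec r (PX t)).
    + rewrite pind_true by auto.
      pose proof (pind_nonneg (~ int_stop N PX PY n t /\ PX t <= r) _ H). lra.
    + rewrite (pind_false (r < PX t)), pind_true by (tauto || lra). lra.
Qed.

(* Through J_y pass small non-stopped intervals of total length at most min(P(y), 2r):
   each one straddles an endpoint of J_y and lies within r of it. *)
Lemma open_overlap_bound y m : In y (words N n) ->
  lsum (fun t => small_open_overlap y t) (words M m) <= Rmin (PY y) (2 * r).
Proof.
  intros Hy. apply words_In in Hy. destruct (ival_props N PY HY y (proj2 Hy)) as [HwY [HlY HhY]].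
  pose proof (P_nonneg N PY HY y). unfold small_open_overlap. apply Rmin_glb.
  - rewrite <- (overlap_self N PY HY y (proj2 Hy)), overlap_sym, <- (level_tile M PX HX m).
    apply lsum_le. intros t _. apply pind_le, overlap_nonneg.
  - apply Rle_trans with (lsum (fun t => overlap (lo PX t) (hi PX t) (lo PY y) (lo PY y + r) +
                                         overlap (lo PX t) (hi PX t) (hi PY y - r) (hi PY y))
                               (words M m)).
    + apply lsum_le. intros t Ht. apply words_In in Ht.
      destruct (ival_props M PX HX t (proj2 Ht)) as [Hw [Hl Hh]].
      destruct (classic (~ int_stop N PX PY n t /\ PX t <= r)) as [[Hns Hsmall]|HA].
      * rewrite pind_true by auto. pose proof (P_nonneg M PX HX t).
        apply overlap_straddle; try lra.
        intros [H1 H2]. apply Hns. exists y. split; [apply words_In; auto|apply isub_of; auto].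
      * rewrite pind_false by auto.
        pose proof (overlap_nonneg (lo PX t) (hi PX t) (lo PY y) (lo PY y + r)).
        pose proof (overlap_nonneg (lo PX t) (hi PX t) (hi PY y - r) (hi PY y)). lra.
    + rewrite lsum_plus, !(level_tile M PX HX).
      pose proof (overlap_le_len 0 1 (lo PY y) (lo PY y + r)).
      pose proof (overlap_le_len 0 1 (hi PY y - r) (hi PY y)). lra.
Qed.

Lemma notstop_bound m :
  lsum (fun t => pind (~ int_stop N PX PY n t) (PX t)) (words M m) <=
  lsum (fun t => pind (r < PX t) (PX t)) (words M m) +
  lsum (fun y => Rmin (PY y) (2 * r)) (words N n).
Proof.
  eapply Rle_trans.
  { apply lsum_le. intros t Ht. apply words_In in Ht. apply notstop_split. tauto. }
  rewrite lsum_plus. apply Rplus_le_compat_l. rewrite lsum_swap.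
  apply lsum_le. intros y Hy. apply open_overlap_bound; auto.
Qed.

End NotStopped.

(* The ratio 2^(-a) of the geometric thresholds r_j = 2^(-ja). *)
Definition geom (a : R) : R := exp (- (a * ln 2)).

Lemma geom_bounds a : 0 < a -> 0 < geom a < 1.
Proof.
  intros. unfold geom. split; [apply exp_pos|].
  rewrite <- exp_0. apply exp_increasing. pose proof ln2_pos. nra.
Qed.

Lemma ln_geom_pow a j : ln (geom a ^ j) = - (INR j * a * ln 2).
Proof. unfold geom. rewrite ln_pow by apply exp_pos. rewrite ln_exp. ring. Qed.

(* sum_j min(p, 2 * 2^(-ja)) <= (p log 1/p) / a + O(p): the terms equal p until
   2^(-ja) drops below p/2, after about (1 + log 1/p)/a steps, and then decay geometrically. *)
Lemma min_sum p a m : 0 < a -> 0 <= p <= 1 ->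
  lsum (fun j => Rmin p (2 * geom a ^ j)) (seq 0 m) <=
  ent_term p / a + p * (/ a + 1 + / (1 - geom a)).
Proof.
  intros Ha Hp. pose proof (geom_bounds a Ha) as Hx. set (x := geom a) in *.
  unfold ent_term. destruct (Rlt_dec 0 p) as [Hp0|Hp0].
  2:{ replace p with 0 by lra. rewrite (lsum_ext _ (fun _ => 0)), lsum_zero; [unfold Rdiv; lra|].
      intros j _. apply Rmin_left. pose proof (pow_lt x j ltac:(lra)). lra. }
  set (g := log2 (/ p)). assert (Hg : 0 <= g) by (apply log2_inv_nonneg; lra).
  destruct (ceil_nat ((1 + g) / a)) as [J [HJ1 HJ2]].
  { apply Rmult_le_pos; [lra|left; apply Rinv_0_lt_compat; lra]. }
  assert (HxJ : x ^ J <= p / 2).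
  { pose proof (pow_lt x J ltac:(lra)). pose proof ln2_pos.
    assert (HJa : 1 + g < INR J * a).
    { apply Rmult_lt_compat_r with (r := a) in HJ1; auto. unfold Rdiv in HJ1.
      rewrite Rmult_assoc, Rinv_l, Rmult_1_r in HJ1 by lra. lra. }
    unfold g, log2 in HJa. rewrite ln_Rinv in HJa by lra.
    assert (ln 2 - ln p < INR J * a * ln 2).
    { apply Rmult_lt_compat_r with (r := ln 2) in HJa; auto.
      replace ((1 + - ln p / ln 2) * ln 2) with (ln 2 - ln p) in HJa by (field; lra). lra. }
    destruct (Rle_lt_dec (x ^ J) (p / 2)) as [|Hlt]; auto. exfalso.
    assert (Hp2 : 0 < p / 2) by lra. pose proof (ln_increasing _ _ Hp2 Hlt) as Hln.
    unfold x in Hln. rewrite ln_geom_pow in Hln. unfold Rdiv in Hln.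
    rewrite ln_mult, ln_Rinv in Hln by lra. lra. }
  apply Rle_trans with
    (lsum (fun j => p * pind (j < J)%nat 1 + 2 * pind (J <= j)%nat (x ^ j)) (seq 0 m)).
  { apply lsum_le. intros j _. destruct (le_lt_dec J j).
    - rewrite (pind_false (j < J)%nat), pind_true by lia.
      rewrite Rmult_0_r, Rplus_0_l. apply Rmin_r.
    - rewrite pind_true, (pind_false (J <= j)%nat) by lia. rewrite Rmult_0_r, Rplus_0_r, Rmult_1_r.
      apply Rmin_l. }
  rewrite lsum_plus, !lsum_scal, lsum_count_lt. pose proof (geo_sum J x m Hx).
  assert (INR (Nat.min m J) <= INR J) by (apply le_INR; lia).
  assert (2 * lsum (fun j => pind (J <= j)%nat (x ^ j)) (seq 0 m) <= p / (1 - x)).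
  { eapply Rle_trans; [apply Rmult_le_compat_l; [lra|apply H]|]. unfold Rdiv.
    rewrite <- Rmult_assoc. apply Rmult_le_compat_r; [left; apply Rinv_0_lt_compat|]; lra. }
  assert (p * INR J <= p * ((1 + g) / a + 1)) by (apply Rmult_le_compat_l; lra).
  assert (p * ((1 + g) / a + 1) + p / (1 - x) = p * g / a + p * (/ a + 1 + / (1 - x)))
    by (field; lra).
  nra.
Qed.

Lemma big_mass_le M P j a : process M P -> 0 < a -> (1 <= j)%nat ->
  lsum (fun t => pind (geom a ^ j < P t) (P t)) (words M j) <= Pr_le M P j a.
Proof.
  intros HP Ha Hj. apply lsum_le. intros t _. destruct (classic (geom a ^ j < P t)) as [H|H].
  - rewrite pind_true by auto. destruct Rle_dec as [_|Hn]; [lra|]. exfalso. apply Hn.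
    unfold info, log2. pose proof ln2_pos. pose proof (pow_lt _ j (proj1 (geom_bounds a Ha))).
    pose proof (ln_increasing _ _ H1 H) as Hln. rewrite ln_geom_pow in Hln. rewrite ln_Rinv by lra.
    assert (0 < INR j) by (apply lt_0_INR; lia).
    assert (- ln (P t) / ln 2 < INR j * a).
    { apply Rmult_lt_reg_r with (ln 2); auto.
      unfold Rdiv. rewrite Rmult_assoc, Rinv_l by lra. lra. }
    apply Rmult_le_reg_l with (INR j); auto. rewrite <- Rmult_assoc, Rinv_r by lra. lra.
  - rewrite pind_false by auto. destruct Rle_dec; [apply (P_nonneg M); auto|lra].
Qed.

Lemma survival_sum_bound M N PX PY n a K m1 : process M PX -> process N PY -> 0 < a ->
  (1 <= m1)%nat -> (forall j, (m1 <= j)%nat -> Pr_le M PX j a <= K / INR j ^ 2) ->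
  forall m, lsum (survival M PX (int_stop N PX PY n)) (seq 0 (S m)) <=
            INR m1 + 2 * Rabs K + (/ a + 1 + / (1 - geom a)) + entropy N PY n / a.
Proof.
  intros HX HY Ha Hm1 HK m. pose proof (geom_bounds a Ha) as Hx. set (x := geom a) in *.
  set (spread := fun j => lsum (fun y => Rmin (PY y) (2 * x ^ j)) (words N n)).
  assert (HS : forall j, 0 <= spread j).
  { intros j. apply lsum_nonneg. intros y _. apply Rmin_glb; [apply (P_nonneg N); auto|].
    pose proof (pow_lt x j ltac:(lra)). lra. }
  replace (lsum (survival M PX (int_stop N PX PY n)) (seq 0 (S m))) with
    (lsum (fun j => survival M PX (int_stop N PX PY n) j - spread j) (seq 0 (S m)) +
     lsum spread (seq 0 (S m)))
    by (rewrite lsum_minus; ring).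
  rewrite Rplus_assoc. apply Rplus_le_compat.
  - (* beyond m1, not stopping forces either a rare heavy string or a small term spread j *)
    apply tail_sum_bound; auto.
    + intros j _. pose proof (survival_le_1 M PX HX (int_stop N PX PY n) j). specialize (HS j). lra.
    + intros j Hj.
      enough (survival M PX (int_stop N PX PY n) j <= K / INR j ^ 2 + spread j) by lra.
      eapply Rle_trans; [apply (survival_le_notstop M PX HX)|].
      eapply Rle_trans;
        [apply (notstop_bound M N PX PY HX HY n (x ^ j) (pow_lt x j ltac:(lra)) j)|].
      apply Rplus_le_compat_r. eapply Rle_trans; [apply (big_mass_le M PX j a HX Ha); lia|].
      apply HK; auto.
  - unfold spread. rewrite lsum_swap.
    apply Rle_trans with
      (lsum (fun y => ent_term (PY y) / a + PY y * (/ a + 1 + / (1 - x))) (words N n)).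
    + apply lsum_le. intros y Hy. apply words_In in Hy. apply min_sum; auto.
      split; [apply (P_nonneg N); auto|apply (P_le1 N); tauto].
    + rewrite lsum_plus. unfold Rdiv.
      rewrite (lsum_ext (fun y => PY y * (/ a + 1 + / (1 - x)))
                        (fun y => (/ a + 1 + / (1 - x)) * PY y))
        by (intros; ring).
      rewrite (lsum_ext (fun y => ent_term (PY y) * / a) (fun y => / a * ent_term (PY y)))
        by (intros; ring).
      rewrite !lsum_scal, (P_total N PY HY), entropy_as_sum. right; ring.
Qed.

Lemma rate_below hl HY eps : 0 < hl -> 0 <= HY -> 0 < eps ->
  exists a, 0 < a < hl /\ HY / a <= HY / hl + eps / 2.
Proof.
  intros Hhl HY0 Heps. set (q := HY + 1 + hl * eps / 2).
  assert (Hq : HY + 1 < q) by (unfold q; nra).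
  exists (hl * (HY + 1) / q). split; [split|].
  - apply Rdiv_lt_0_compat; nra.
  - apply Rmult_lt_reg_r with q; [lra|]. unfold Rdiv. rewrite Rmult_assoc, Rinv_l by lra. nra.
  - replace (HY / (hl * (HY + 1) / q)) with (HY / hl + eps / 2 * (HY / (HY + 1)))
      by (unfold q; field; nra).
    assert (HY / (HY + 1) <= 1).
    { apply Rmult_le_reg_r with (HY + 1); [lra|].
      unfold Rdiv. rewrite Rmult_assoc, Rinv_l by lra. lra. }
    nra.
Qed.

Lemma achievability M N PX PY hl HY :
  process M PX -> process N PY ->
  is_limsup (fun n => entropy N PY n / INR n) HY ->
  lower_tail M PX hl -> 0 < hl ->
  forall eps, 0 < eps -> int_achievable M N PX PY (HY / hl + eps).
Proof.
  intros HX HYp Hlim Htail Hhl eps Heps.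
  assert (HY0 : 0 <= HY).
  { apply (limsup_nonneg _ _ Hlim). intros n. apply Rmult_le_pos; [apply entropy_nonneg; auto|].
    destruct n; [simpl; rewrite Rinv_0; lra|left; apply Rinv_0_lt_compat, lt_0_INR; lia]. }
  destruct (rate_below hl HY eps Hhl HY0 Heps) as [a [[Ha Hahl] HYa]].
  destruct (Htail (hl - a) ltac:(lra)) as [K [m0 HK]]. replace (hl - (hl - a)) with a in HK by ring.
  set (C2 := INR (Nat.max m0 1) + 2 * Rabs K + (/ a + 1 + / (1 - geom a))).
  intros eta Heta.
  destruct (Hlim (eps * a / 4)) as [[N0 HN0] _]; [nra|].
  destruct (eventually_div_small C2 (eps / 4)) as [N1 HN1]; [lra|].
  exists (Nat.max N0 N1). intros n Hn.
  destruct (expected_time_of_survival M PX HX (int_stop N PX PY n) (C2 + entropy N PY n / a))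
    as [e [He Hle]].
  { intros m. unfold C2. apply survival_sum_bound; auto; [lia|]. intros j Hj. apply HK; lia. }
  exists e. split; auto. destruct (HN1 n ltac:(lia)) as [Hn0 HC2]. specialize (HN0 n ltac:(lia)).
  assert (e / INR n <= C2 / INR n + (entropy N PY n / INR n) / a).
  { unfold Rdiv. apply Rle_trans with ((C2 + entropy N PY n * / a) * / INR n).
    - apply Rmult_le_compat_r; [left; apply Rinv_0_lt_compat; auto|lra].
    - right. field. lra. }
  assert ((entropy N PY n / INR n) / a <= HY / a + eps / 4).
  { unfold Rdiv at 1. apply Rle_trans with ((HY + eps * a / 4) * / a).
    - apply Rmult_le_compat_r; [left; apply Rinv_0_lt_compat|]; lra.
    - right. field. lra. }
  lra.
Qed.

(* Part (i) holds for every
   hl > 0 satisfying the lower-tail condition. *)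
Theorem theorem4 (M N : nat) (PX PY : list nat -> R) (hl hu HY : R) :
  process M PX -> process N PY ->
  is_Hlower M PX hl -> is_Hupper M PX hu ->
  is_limsup (fun n => entropy N PY n / INR n) HY ->
  (lower_tail M PX hl -> 0 < hl ->
     forall eps, 0 < eps -> int_achievable M N PX PY (HY / hl + eps)) /\
  (upper_tail M PX hu ->
     forall L, achievable M N PX PY L -> HY <= L * hu).
Proof.
  intros HX HYp _ Hupper Hlim. split.
  - apply (achievability M N PX PY hl HY); auto.
  - apply (converse M N PX PY hu HY); auto.
Qed.
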